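(* (Preservation) If $\vdash\mathtt M:\mathsf{Idx}$ is derivable and $\mathtt M\Downarrow^1\mathtt N$, then $\vdash\mathtt N:\mathsf{Idx}$ is derivable. (Progress) If $\vdash\mathtt M:\mathsf{Idx}$ is derivable and $\mathtt M\Downarrow^1\mathtt N$, then $\mathtt N$ is a numeral $\underline n$.
   Context: qPCF. Gates: $\mathcal U=\bigcup_k\mathcal U(k)$, $\mathtt U\in\mathcal U(k)$ acts on $k+1$ qubits; $\ddagger$ is a fixed total arity-preserving map on gate names. Raw terms: $\mathtt{M},\mathtt{N},\mathtt{P},\mathtt{Q},\mathtt{E}::=\mathtt{x}\mid\lambda\mathtt{x}^\sigma.\mathtt{M}\mid\mathtt{M}\mathtt{N}\mid\underline{n}\mid\mathtt{pred}\mid\mathtt{succ}\mid\mathtt{if}\mid\mathtt{Y}_\sigma\mid\mathtt{set}\mid\mathtt{get}\mid\mathtt{U}\mid{::}\mid{\parallel}\mid\mathtt{iter}\mid\mathtt{reverse}\mid\odot\mathtt{E}\mathtt{E}'\ (\odot\in\{+,*\})\mid\mathtt{size}\mid\mathtt{dMeas}$, with infix $::$, $\parallel$, $+$. Types $\sigma::=\mathsf{Nat}\mid\mathsf{Idx}\mid\mathsf{Circ}(\mathtt E)\mid\Pi\mathtt x^\sigma.\tau$; $\sigma\to\tau$ is a non-dependent $\Pi$. Bases $B$: finite variable-to-type assignments with distinct variables. $\mathrm{sC}(B,\mathsf{Nat})=\mathrm{sC}(B,\mathsf{Idx})=\emptyset$, $\mathrm{sC}(B,\mathsf{Circ}(\mathtt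 E))=\{B\vdash\mathtt E:\mathsf{Idx}\}$, $\mathrm{sC}(B,\Pi\mathtt x^\sigma.\tau)=\mathrm{sC}(B,\sigma)\cup\mathrm{sC}(B\cup\{\mathtt x:\sigma\},\tau)$, extended to sets by union; $\mathrm{WF}(B,S)$ means all typings in $\mathrm{sC}(B,S)$ are derivable. Typing rules: (P0) $\mathrm{WF}(B,\mathrm{codom}(B)\cup\{\sigma\})\Rightarrow B\cup\{\mathtt x:\sigma\}\vdash\mathtt x:\sigma$; (P1) $B\cup\{\mathtt x:\sigma\}\vdash\mathtt N:\tau\Rightarrow B\vdash\lambda\mathtt x^\sigma.\mathtt N:\Pi\mathtt x^\sigma.\tau$; (P2) $B\vdash\mathtt P:\Pi\mathtt x^\sigma.\tau$, $B\vdash\mathtt Q:\sigma\Rightarrow B\vdash\mathtt{PQ}:\tau[\mathtt Q/\mathtt x]$; given $\mathrm{WF}(B,\mathrm{codom}(B))$: $\mathtt{succ},\mathtt{pred}:\mathsf{Nat}\to\mathsf{Nat}$, $\mathtt{if}:\mathsf{Nat}\to\mathsf{Nat}\to\mathsf{Nat}\to\mathsf{Nat}$, $\mathtt{get},\mathtt{set}:\mathsf{Nat}\to\mathsf{Nat}\to\mathsf{Nat}$, $\underline n:\mathsf{Idx}$, $\mathtt U:\mathsf{Circ}(\underline k)$ for $\mathtt U\in\mathcal U(k)$; (P5') $B\vdash\mathtt E:\mathsf{Idx}\Rightarrow B\vdash\mathtt{if}:\mathsf{Nat}\to\mathsf{Circ}(\mathtt E)\to\mathsf{Circ}(\mathtt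 E)\to\mathsf{Circ}(\mathtt E)$; (P6) $\sigma=\tau_1\to\cdots\to\tau_n\to\gamma$, $\gamma\in\{\mathsf{Nat},\mathsf{Circ}(\mathtt E)\}$, $\mathrm{WF}(B,\mathrm{codom}(B)\cup\{\sigma\})\Rightarrow B\vdash\mathtt Y_\sigma:(\sigma\to\sigma)\to\sigma$; (I0) $B\vdash\mathtt M:\mathsf{Idx}\Rightarrow B\vdash\mathtt M:\mathsf{Nat}$; (I2) $B\vdash\mathtt E_0,\mathtt E_1:\mathsf{Idx}\Rightarrow B\vdash\odot\mathtt E_0\mathtt E_1:\mathsf{Idx}$; (I3) $B\vdash\mathtt M:\mathsf{Circ}(\mathtt E)\Rightarrow B\vdash\mathtt{size}\,\mathtt M:\mathsf{Idx}$; given $B\vdash\mathtt E,\mathtt E_0,\mathtt E_1:\mathsf{Idx}$: ${::}:\mathsf{Circ}(\mathtt E)\to\mathsf{Circ}(\mathtt E)\to\mathsf{Circ}(\mathtt E)$, ${\parallel}:\mathsf{Circ}(\mathtt E_0)\to\mathsf{Circ}(\mathtt E_1)\to\mathsf{Circ}(\mathtt E_0+\mathtt E_1+\underline1)$, $\mathtt{reverse}:\mathsf{Circ}(\mathtt E)\to\mathsf{Circ}(\mathtt E)$, $\mathtt{iter}:\Pi\mathtt x^{\mathsf{Idx}}.\mathsf{Circ}(\mathtt E_0)\to\mathsf{Circ}(\mathtt E_1)\to\mathsf{Circ}(\mathtt E_0+((\underline1+\mathtt E_1)*\mathtt x))$, $\mathtt{dMeas}:\mathsf{Nat}\to\mathsf{Circ}(\mathtt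 E)\to\mathsf{Nat}$. Types are identified modulo $\alpha$, $\beta$-convertibility of terms in types, and ring laws of $+,*$ with $0,1$. Evaluation $\mathtt M\Downarrow^\alpha\mathtt V$ ($\mathtt M$ closed of ground type, $0<\alpha\le1$, $\mathtt V$ a numeral or a term built from gate names with $::,\parallel$) is the big-step call-by-name relation: $\underline n\Downarrow^1\underline n$; $\mathtt{succ}$/$\mathtt{pred}$ evaluate their argument and add/subtract one; $(\lambda\mathtt x.\mathtt M)\mathtt N\vec{\mathtt P}\Downarrow^\alpha\mathtt V$ if $\mathtt M[\mathtt N/\mathtt x]\vec{\mathtt P}\Downarrow^\alpha\mathtt V$; $\mathtt{if}\,\mathtt M\mathtt L\mathtt R\Downarrow^{\alpha\alpha'}\mathtt V$ if $\mathtt M\Downarrow^\alpha\underline0,\mathtt L\Downarrow^{\alpha'}\mathtt V$ or $\mathtt M\Downarrow^\alpha\underline{n+1},\mathtt R\Downarrow^{\alpha'}\mathtt V$; $\mathtt Y\mathtt M\vec{\mathtt P}\Downarrow^\alpha\mathtt V$ if $\mathtt M(\mathtt Y\mathtt M)\vec{\mathtt P}\Downarrow^\alpha\mathtt V$; $\mathtt{size}\,\mathtt M\Downarrow^\alpha\underline n$ if $\vdash\mathtt M:\mathsf{Circ}(\mathtt E)$ and $\mathtt E\Downarrow^\alpha\underline n$; $\odot\mathtt E_0\mathtt E_1\Downarrow^{\alpha\alpha'}\underline{m\odot n}$ if $\mathtt E_0\Downarrow^\alpha\underline m,\mathtt E_1\Downarrow^{\alpha'}\underline n$; $\mathtt{get}\,\mathtt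 M\mathtt N$ / $\mathtt{set}\,\mathtt M\mathtt N$ evaluate both arguments to $\underline m,\underline n$ (probabilities multiplied) and return the $n$-th binary digit of $m$ / $m$ with that digit set to $1$; $\mathtt U\Downarrow^\alpha\mathtt U$; $::$, $\parallel$ evaluate components; $\mathtt{reverse}$ replaces gates by their $\ddagger$-image and reverses sequential order; $\mathtt{iter}\,\mathtt E\mathtt M_0\mathtt M_1\Downarrow\mathtt C_1\parallel\cdots\parallel\mathtt C_1\parallel\mathtt C_0$ ($n$ copies, $\mathtt E\Downarrow\underline n$); $\mathtt{dMeas}\,\mathtt M\mathtt N\Downarrow^{\alpha\alpha'\alpha''}\underline n$ if $\mathtt M\Downarrow^\alpha\underline m$, $\mathtt N\Downarrow^{\alpha'}\mathtt C$, $\vdash\mathtt N:\mathsf{Circ}(\underline k)$ and $\underline n$ is a quantum measurement outcome of the circuit $\mathtt C$ on input $m$, obtained with probability $\alpha''$. *)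

From Stdlib Require Import Reals List Arith PeanoNat.
Import ListNotations.

Inductive tm (G : Type) : Type :=
| Var : nat -> tm G
| Lam : nat -> ty G -> tm G -> tm G
| App : tm G -> tm G -> tm G
| Num : nat -> tm G
| Pred : tm G
| Succ : tm G
| If : tm G
| Yc : ty G -> tm G
| SetB : tm G
| GetB : tm G
| Gate : G -> tm G
| Seq : tm G
| Par : tm G
| Iter : tm G
| Reverse : tm G
| Plus : tm G -> tm G -> tm G
| Times : tm G -> tm G -> tm G
| Size : tm G
| DMeas : tm G
with ty (G : Type) : Type :=
| TNat : ty G
| TIdx : ty G
| TCirc : tm G -> ty G
| TPi : nat -> ty G -> ty G -> ty G.

Arguments Var {G} _. Arguments Lam {G} _ _ _. Arguments App {G} _ _.
Arguments Num {G} _. Arguments Pred {G}. Arguments Succ {G}. Arguments If {G}.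
Arguments Yc {G} _. Arguments SetB {G}. Arguments GetB {G}. Arguments Gate {G} _.
Arguments Seq {G}. Arguments Par {G}. Arguments Iter {G}. Arguments Reverse {G}.
Arguments Plus {G} _ _. Arguments Times {G} _ _. Arguments Size {G}.
Arguments DMeas {G}.
Arguments TNat {G}. Arguments TIdx {G}. Arguments TCirc {G} _.
Arguments TPi {G} _ _ _.

Fixpoint vars_tm {G} (M : tm G) : list nat :=
  match M with
  | Var x => [x]
  | Lam x s N => x :: vars_ty s ++ vars_tm N
  | App P Q => vars_tm P ++ vars_tm Q
  | Yc s => vars_ty s
  | Plus P Q => vars_tm P ++ vars_tm Q
  | Times P Q => vars_tm P ++ vars_tm Q
  | _ => []
  end
with vars_ty {G} (s : ty G) : list nat :=
  match s with
  | TCirc E => vars_tm E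
  | TPi x a b => x :: vars_ty a ++ vars_ty b
  | _ => []
  end.

Definition drop_var (x : nat) (l : list nat) : list nat :=
  filter (fun y => negb (Nat.eqb y x)) l.

Fixpoint fv_tm {G} (M : tm G) : list nat :=
  match M with
  | Var x => [x]
  | Lam x s N => fv_ty s ++ drop_var x (fv_tm N)
  | App P Q => fv_tm P ++ fv_tm Q
  | Yc s => fv_ty s
  | Plus P Q => fv_tm P ++ fv_tm Q
  | Times P Q => fv_tm P ++ fv_tm Q
  | _ => []
  end
with fv_ty {G} (s : ty G) : list nat :=
  match s with
  | TCirc E => fv_tm E
  | TPi x a b => fv_ty a ++ drop_var x (fv_ty b)
  | _ => []
  end.

Definition fresh (l : list nat) : nat := S (list_max l).

(* ---------- Capture-avoiding simultaneous substitution ----------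
   Bound variables are always renamed to a fresh variable (harmless, since
   terms and types are considered up to alpha-conversion). *)
Fixpoint lookup {G} (env : list (nat * tm G)) (x : nat) : option (tm G) :=
  match env with
  | [] => None
  | (y, N) :: env' => if Nat.eqb x y then Some N else lookup env' x
  end.

Definition env_vars {G} (env : list (nat * tm G)) : list nat :=
  flat_map (fun p => fst p :: vars_tm (snd p)) env.

Fixpoint subst_tm {G} (env : list (nat * tm G)) (M : tm G) : tm G :=
  match M with
  | Var x => match lookup env x with Some N => N | None => Var x end
  | Lam x s N =>
      let z := fresh (x :: vars_tm N ++ env_vars env) in
      Lam z (subst_ty env s) (subst_tm ((x, Var z) :: env) N)
  | App P Q => App (subst_tm env P) (subst_tm env Q)
  | Yc s => Yc (subst_ty env s)
  | Plus P Q => Plus (subst_tm env P) (subst_tm env Q)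
  | Times P Q => Times (subst_tm env P) (subst_tm env Q)
  | Num n => Num n
  | Pred => Pred | Succ => Succ | If => If | SetB => SetB | GetB => GetB
  | Gate U => Gate U | Seq => Seq | Par => Par | Iter => Iter
  | Reverse => Reverse | Size => Size | DMeas => DMeas
  end
with subst_ty {G} (env : list (nat * tm G)) (s : ty G) : ty G :=
  match s with
  | TNat => TNat
  | TIdx => TIdx
  | TCirc E => TCirc (subst_tm env E)
  | TPi x a b =>
      let z := fresh (x :: vars_ty b ++ env_vars env) in
      TPi z (subst_ty env a) (subst_ty ((x, Var z) :: env) b)
  end.

Definition subst1_tm {G} (x : nat) (N : tm G) (M : tm G) := subst_tm [(x, N)] M.
Definition subst1_ty {G} (x : nat) (N : tm G) (s : ty G) := subst_ty [(x, N)] s.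

Definition arrow {G} (s t : ty G) : ty G := TPi (fresh (vars_ty t)) s t.

Inductive conv_tm {G} : tm G -> tm G -> Prop :=
| ct_refl M : conv_tm M M
| ct_sym M N : conv_tm M N -> conv_tm N M
| ct_trans M N P : conv_tm M N -> conv_tm N P -> conv_tm M P
| ct_lam x s s' M M' : conv_ty s s' -> conv_tm M M' -> conv_tm (Lam x s M) (Lam x s' M')
| ct_app M M' N N' : conv_tm M M' -> conv_tm N N' -> conv_tm (App M N) (App M' N')
| ct_Y s s' : conv_ty s s' -> conv_tm (Yc s) (Yc s')
| ct_plus M M' N N' : conv_tm M M' -> conv_tm N N' -> conv_tm (Plus M N) (Plus M' N')
| ct_times M M' N N' : conv_tm M M' -> conv_tm N N' -> conv_tm (Times M N) (Times M' N')
| ct_alpha x y s M : ~ In y (fv_tm M) ->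
    conv_tm (Lam x s M) (Lam y s (subst1_tm x (Var y) M))
| ct_beta x s M N : conv_tm (App (Lam x s M) N) (subst1_tm x N M)
| ct_plusA E F H : conv_tm (Plus E (Plus F H)) (Plus (Plus E F) H)
| ct_plusC E F : conv_tm (Plus E F) (Plus F E)
| ct_plus0 E : conv_tm (Plus (Num 0) E) E
| ct_timesA E F H : conv_tm (Times E (Times F H)) (Times (Times E F) H)
| ct_timesC E F : conv_tm (Times E F) (Times F E)
| ct_times1 E : conv_tm (Times (Num 1) E) E
| ct_times0 E : conv_tm (Times (Num 0) E) (Num 0)
| ct_distr E F H : conv_tm (Times E (Plus F H)) (Plus (Times E F) (Times E H))
| ct_plusN m n : conv_tm (Plus (Num m) (Num n)) (Num (m + n))
| ct_timesN m n : conv_tm (Times (Num m) (Num n)) (Num (m * n))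
with conv_ty {G} : ty G -> ty G -> Prop :=
| cy_refl s : conv_ty s s
| cy_sym s t : conv_ty s t -> conv_ty t s
| cy_trans s t u : conv_ty s t -> conv_ty t u -> conv_ty s u
| cy_circ E E' : conv_tm E E' -> conv_ty (TCirc E) (TCirc E')
| cy_pi x s s' t t' : conv_ty s s' -> conv_ty t t' -> conv_ty (TPi x s t) (TPi x s' t')
| cy_alpha x y s t : ~ In y (fv_ty t) ->
    conv_ty (TPi x s t) (TPi y s (subst1_ty x (Var y) t)).

Definition base (G : Type) := list (nat * ty G).
Definition is_base {G} (B : base G) : Prop := NoDup (map fst B).
Definition remove_var {G} (x : nat) (B : base G) : base G :=
  filter (fun p => negb (Nat.eqb (fst p) x)) B.
(* B u {x : sigma}  (x not in the domain of B, up to alpha-renaming) *)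
Definition update {G} (x : nat) (s : ty G) (B : base G) : base G :=
  (x, s) :: remove_var x B.

Inductive yshape {G} : ty G -> Prop :=
| ys_nat : yshape TNat
| ys_circ E : yshape (TCirc E)
| ys_arr x s t : ~ In x (fv_ty t) -> yshape t -> yshape (TPi x s t).

Definition iter_ty {G} (E0 E1 : tm G) : ty G :=
  let x := fresh (vars_tm E0 ++ vars_tm E1) in
  TPi x TIdx (arrow (TCirc E0) (arrow (TCirc E1)
     (TCirc (Plus E0 (Times (Plus (Num 1) E1) (Var x)))))).

(* ---------- Typing: typ ar B M s  is  B |- M : s ; 
   sct ar B s  is  WF(B, {s}), i.e. all judgements of sC(B, s) derivable.
   ar U = k  means  U \in U(k). *)
Inductive typ {G} (ar : G -> nat) : base G -> tm G -> ty G -> Prop :=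
| T_var B x s : is_base B -> In (x, s) B ->
    (forall t, In t (map snd (remove_var x B)) -> sct ar (remove_var x B) t) ->
    sct ar (remove_var x B) s ->
    typ ar B (Var x) s
| T_lam B x s N t : is_base B -> typ ar (update x s B) N t ->
    typ ar B (Lam x s N) (TPi x s t)
| T_app B P Q x s t : typ ar B P (TPi x s t) -> typ ar B Q s ->
    typ ar B (App P Q) (subst1_ty x Q t)
| T_conv B M s t : typ ar B M s -> conv_ty s t -> typ ar B M t
| T_succ B : is_base B -> (forall t, In t (map snd B) -> sct ar B t) ->
    typ ar B Succ (arrow TNat TNat)
| T_pred B : is_base B -> (forall t, In t (map snd B) -> sct ar B t) ->
    typ ar B Pred (arrow TNat TNat)
| T_if B : is_base B -> (forall t, In t (map snd B) -> sct ar B t) ->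
    typ ar B If (arrow TNat (arrow TNat (arrow TNat TNat)))
| T_get B : is_base B -> (forall t, In t (map snd B) -> sct ar B t) ->
    typ ar B GetB (arrow TNat (arrow TNat TNat))
| T_set B : is_base B -> (forall t, In t (map snd B) -> sct ar B t) ->
    typ ar B SetB (arrow TNat (arrow TNat TNat))
| T_num B n : is_base B -> (forall t, In t (map snd B) -> sct ar B t) ->
    typ ar B (Num n) TIdx
| T_gate B U : is_base B -> (forall t, In t (map snd B) -> sct ar B t) ->
    typ ar B (Gate U) (TCirc (Num (ar U)))
| T_ifc B E : typ ar B E TIdx ->
    typ ar B If (arrow TNat (arrow (TCirc E) (arrow (TCirc E) (TCirc E))))
| T_Y B s : is_base B -> (forall t, In t (map snd B) -> sct ar B t) ->
    sct ar B s -> yshape s ->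
    typ ar B (Yc s) (arrow (arrow s s) s)
| T_idx B M : typ ar B M TIdx -> typ ar B M TNat
| T_plus B E0 E1 : typ ar B E0 TIdx -> typ ar B E1 TIdx -> typ ar B (Plus E0 E1) TIdx
| T_times B E0 E1 : typ ar B E0 TIdx -> typ ar B E1 TIdx -> typ ar B (Times E0 E1) TIdx
| T_size B M E : typ ar B M (TCirc E) -> typ ar B (App Size M) TIdx
| T_seq B E : typ ar B E TIdx ->
    typ ar B Seq (arrow (TCirc E) (arrow (TCirc E) (TCirc E)))
| T_par B E0 E1 : typ ar B E0 TIdx -> typ ar B E1 TIdx ->
    typ ar B Par (arrow (TCirc E0) (arrow (TCirc E1) (TCirc (Plus (Plus E0 E1) (Num 1)))))
| T_rev B E : typ ar B E TIdx -> typ ar B Reverse (arrow (TCirc E) (TCirc E))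
| T_iter B E0 E1 : typ ar B E0 TIdx -> typ ar B E1 TIdx -> typ ar B Iter (iter_ty E0 E1)
| T_dmeas B E : typ ar B E TIdx -> typ ar B DMeas (arrow TNat (arrow (TCirc E) TNat))
with sct {G} (ar : G -> nat) : base G -> ty G -> Prop :=
| S_nat B : sct ar B TNat
| S_idx B : sct ar B TIdx
| S_circ B E : typ ar B E TIdx -> sct ar B (TCirc E)
| S_pi B x s t : sct ar B s -> sct ar (update x s B) t -> sct ar B (TPi x s t).

Fixpoint apps {G} (M : tm G) (Ps : list (tm G)) : tm G :=
  match Ps with [] => M | P :: Ps' => apps (App M P) Ps' end.

Fixpoint crev {G} (dag : G -> G) (C : tm G) : tm G :=
  match C with
  | Gate U => Gate (dag U)
  | App (App Seq C1) C2 => App (App Seq (crev dag C2)) (crev dag C1)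
  | App (App Par C1) C2 => App (App Par (crev dag C1)) (crev dag C2)
  | _ => C
  end.

Fixpoint iterpar {G} (n : nat) (C1 C0 : tm G) : tm G :=
  match n with
  | 0 => C0
  | S n' => App (App Par C1) (iterpar n' C1 C0)
  end.

(* meas k C m n p : n is a measurement outcome of the circuit value C
   (on k+1 qubits) run on input m, obtained with probability p. *)
Inductive eval {G} (ar : G -> nat) (dag : G -> G)
    (meas : nat -> tm G -> nat -> nat -> R -> Prop) : tm G -> R -> tm G -> Prop :=
| E_num n : eval ar dag meas (Num n) 1%R (Num n)
| E_succ M a n : eval ar dag meas M a (Num n) ->
    eval ar dag meas (App Succ M) a (Num (S n))
| E_pred M a n : eval ar dag meas M a (Num n) ->
    eval ar dag meas (App Pred M) a (Num (Nat.pred n))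
| E_beta x s M N Ps a V : eval ar dag meas (apps (subst1_tm x N M) Ps) a V ->
    eval ar dag meas (apps (App (Lam x s M) N) Ps) a V
| E_if0 M L Rt a a' V : eval ar dag meas M a (Num 0) -> eval ar dag meas L a' V ->
    eval ar dag meas (apps If [M; L; Rt]) (a * a')%R V
| E_ifS M L Rt a a' n V : eval ar dag meas M a (Num (S n)) -> eval ar dag meas Rt a' V ->
    eval ar dag meas (apps If [M; L; Rt]) (a * a')%R V
| E_Y s M Ps a V : eval ar dag meas (apps (App M (App (Yc s) M)) Ps) a V ->
    eval ar dag meas (apps (App (Yc s) M) Ps) a V
| E_size M E a n : typ ar [] M (TCirc E) -> eval ar dag meas E a (Num n) ->
    eval ar dag meas (App Size M) a (Num n)
| E_plus E0 E1 a a' m n : eval ar dag meas E0 a (Num m) -> eval ar dag meas E1 a' (Num n) ->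
    eval ar dag meas (Plus E0 E1) (a * a')%R (Num (m + n))
| E_times E0 E1 a a' m n : eval ar dag meas E0 a (Num m) -> eval ar dag meas E1 a' (Num n) ->
    eval ar dag meas (Times E0 E1) (a * a')%R (Num (m * n))
| E_get M N a a' m n : eval ar dag meas M a (Num m) -> eval ar dag meas N a' (Num n) ->
    eval ar dag meas (App (App GetB M) N) (a * a')%R (Num (Nat.b2n (Nat.testbit m n)))
| E_set M N a a' m n : eval ar dag meas M a (Num m) -> eval ar dag meas N a' (Num n) ->
    eval ar dag meas (App (App SetB M) N) (a * a')%R (Num (Nat.setbit m n))
| E_gate U : eval ar dag meas (Gate U) 1%R (Gate U)
| E_seq M N a a' C C' : eval ar dag meas M a C -> eval ar dag meas N a' C' ->
    eval ar dag meas (App (App Seq M) N) (a * a')%R (App (App Seq C) C')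
| E_par M N a a' C C' : eval ar dag meas M a C -> eval ar dag meas N a' C' ->
    eval ar dag meas (App (App Par M) N) (a * a')%R (App (App Par C) C')
| E_rev M a C : eval ar dag meas M a C ->
    eval ar dag meas (App Reverse M) a (crev dag C)
| E_iter E M0 M1 a a' a'' n C0 C1 :
    eval ar dag meas E a (Num n) -> eval ar dag meas M0 a' C0 -> eval ar dag meas M1 a'' C1 ->
    eval ar dag meas (apps Iter [E; M0; M1]) (a * a' * a'')%R (iterpar n C1 C0)
| E_dmeas M N a a' a'' m k C n :
    eval ar dag meas M a (Num m) -> eval ar dag meas N a' C ->
    typ ar [] N (TCirc (Num k)) -> meas k C m n a'' -> (0 < a'' <= 1)%R ->
    eval ar dag meas (App (App DMeas M) N) (a * a' * a'')%R (Num n).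

(* Erasing every dependent type to its simple-type shape (Circ(E) becomes a
   bare circuit type, type conversion becomes the identity) gives a typing
   that is stable under substitution and hence under the head beta step of
   evaluation. In that simple system a term of type Idx is never a spine
   headed by if, Y, a gate or a circuit combinator, because those heads only
   return Nat or circuits; so every evaluation rule that can fire on a term of
   type Idx produces a numeral, which is typable at Idx in the empty base. *)
From Stdlib Require Import Reals List Lia.
Import ListNotations.

Section SimpleTypes.
Variable G : Type.

Inductive sty := SNat | SIdx | SCirc | SArr (A B : sty).

Fixpoint erase (s : ty G) : sty :=
  match s with
  | TNat => SNat
  | TIdx => SIdx
  | TCirc _ => SCirc
  | TPi _ a b => SArr (erase a) (erase b)
  end.

Fixpoint final_codom (A : sty) : sty :=
  match A with SArr _ B => final_codom B | _ => A end.

Definition ctx := nat -> option sty.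

Definition extend (g : ctx) (x : nat) (A : sty) : ctx :=
  fun y => if Nat.eqb y x then Some A else g y.

Inductive const_styp : tm G -> sty -> Prop :=
| cs_succ : const_styp Succ (SArr SNat SNat)
| cs_pred : const_styp Pred (SArr SNat SNat)
| cs_if_nat : const_styp If (SArr SNat (SArr SNat (SArr SNat SNat)))
| cs_if_circ : const_styp If (SArr SNat (SArr SCirc (SArr SCirc SCirc)))
| cs_get : const_styp GetB (SArr SNat (SArr SNat SNat))
| cs_set : const_styp SetB (SArr SNat (SArr SNat SNat))
| cs_gate U : const_styp (Gate U) SCirc
| cs_seq : const_styp Seq (SArr SCirc (SArr SCirc SCirc))
| cs_par : const_styp Par (SArr SCirc (SArr SCirc SCirc))
| cs_rev : const_styp Reverse (SArr SCirc SCirc)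
| cs_iter : const_styp Iter (SArr SIdx (SArr SCirc (SArr SCirc SCirc)))
| cs_dmeas : const_styp DMeas (SArr SNat (SArr SCirc SNat))
| cs_size : const_styp Size (SArr SCirc SIdx).

Inductive styp : ctx -> tm G -> sty -> Prop :=
| st_var g x A : g x = Some A -> styp g (Var x) A
| st_lam g x s N B :
    styp (extend g x (erase s)) N B -> styp g (Lam x s N) (SArr (erase s) B)
| st_app g P Q A B : styp g P (SArr A B) -> styp g Q A -> styp g (App P Q) B
| st_idx_nat g M : styp g M SIdx -> styp g M SNat
| st_num g n : styp g (Num n) SIdx
| st_const g c A : const_styp c A -> styp g c A
| st_Y g s : final_codom (erase s) <> SIdx ->
    styp g (Yc s) (SArr (SArr (erase s) (erase s)) (erase s))
| st_plus g P Q : styp g P SIdx -> styp g Q SIdx -> styp g (Plus P Q) SIdx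
| st_times g P Q : styp g P SIdx -> styp g Q SIdx -> styp g (Times P Q) SIdx.

Scheme tm_ty_ind := Induction for tm Sort Prop
  with ty_tm_ind := Induction for ty Sort Prop.
Combined Scheme tm_ty_mutind from tm_ty_ind, ty_tm_ind.

Lemma fv_incl_vars :
  (forall M : tm G, incl (fv_tm M) (vars_tm M)) /\
  (forall s : ty G, incl (fv_ty s) (vars_ty s)).
Proof.
  apply tm_ty_mutind;
    intros; unfold incl in *; simpl in *; intros y;
    repeat rewrite in_app_iff; unfold drop_var; try rewrite filter_In;
    firstorder.
Qed.

Lemma fresh_not_in (l : list nat) : ~ In (fresh l) l.
Proof.
  intros Hin. pose proof (proj1 (list_max_le l (list_max l)) (le_n _)) as Hmax.
  rewrite Forall_forall in Hmax. specialize (Hmax _ Hin). unfold fresh in Hmax. lia.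
Qed.

Lemma erase_subst (env : list (nat * tm G)) (s : ty G) :
  erase (subst_ty env s) = erase s.
Proof.
  revert env; induction s; intros; simpl; auto. rewrite IHs1, IHs2; auto.
Qed.

Lemma conv_ty_erase (s t : ty G) : conv_ty s t -> erase s = erase t.
Proof.
  induction 1; simpl; try congruence.
  unfold subst1_ty; rewrite erase_subst; auto.
Qed.

Lemma styp_ctx_agree g M A : styp g M A ->
  forall d, (forall y, In y (fv_tm M) -> g y = d y) -> styp d M A.
Proof.
  induction 1; intros d Hd; simpl in *;
    try solve [constructor; auto
              | econstructor; [apply IHstyp1 | apply IHstyp2];
                intros; apply Hd; apply in_or_app; auto].
  - apply st_var. rewrite <- Hd; auto.
  - apply st_lam, IHstyp. intros y Hy. unfold extend.
    destruct (Nat.eqb y x) eqn:E; auto. apply Hd, in_or_app. right.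
    unfold drop_var. apply filter_In. rewrite E. auto.
Qed.

Definition subst_var (env : list (nat * tm G)) (y : nat) : tm G :=
  match lookup env y with Some N => N | None => Var y end.

Lemma fv_subst_var env y w :
  In w (fv_tm (subst_var env y)) -> w = y \/ In w (env_vars env).
Proof.
  unfold subst_var. induction env as [|[a N] env IH]; simpl.
  - intuition.
  - rewrite in_app_iff. destruct (Nat.eqb y a); intros Hw.
    + right. right. left. apply (proj1 fv_incl_vars); auto.
    + destruct (IH Hw); auto.
Qed.

Lemma styp_subst g M A : styp g M A -> forall d env,
  (forall y T, In y (fv_tm M) -> g y = Some T -> styp d (subst_var env y) T) ->
  styp d (subst_tm env M) A.
Proof.
  induction 1; intros d env Hd; simpl in *;
    try solve [constructor; auto
              | econstructor; [apply IHstyp1 | apply IHstyp2];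
                intros; eapply Hd; eauto; apply in_or_app; auto].
  - apply (Hd x A); auto.
  - rewrite <- (erase_subst env s). apply st_lam. rewrite erase_subst.
    set (z := fresh (x :: vars_tm N ++ env_vars env)).
    assert (Hz : ~ In z (x :: vars_tm N ++ env_vars env)) by apply fresh_not_in.
    apply IHstyp. intros y T Hy HT. unfold subst_var; simpl. unfold extend in HT.
    destruct (Nat.eqb y x) eqn:Eyx.
    + injection HT as <-. apply st_var. unfold extend. rewrite Nat.eqb_refl; auto.
    + apply styp_ctx_agree with d.
      * apply (Hd y T); auto. apply in_or_app; right.
        unfold drop_var. apply filter_In. rewrite Eyx; auto.
      * intros w Hw. unfold extend. destruct (Nat.eqb w z) eqn:Ewz; auto.
        apply Nat.eqb_eq in Ewz; subst w. exfalso. apply Hz. right. apply in_or_app.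
        destruct (fv_subst_var env y z Hw) as [->|]; auto.
        left. apply (proj1 fv_incl_vars); auto.
  - destruct H; simpl; do 2 constructor.
  - rewrite <- (erase_subst env s). apply st_Y. rewrite erase_subst; auto.
Qed.

Definition sty_sub (A B : sty) : Prop := A = B \/ (A = SIdx /\ B = SNat).

Lemma styp_sub g M A B : styp g M A -> sty_sub A B -> styp g M B.
Proof. intros HM [<-|[-> ->]]; auto using st_idx_nat. Qed.

Lemma styp_app_inv g P Q B : styp g (App P Q) B ->
  exists A B', styp g P (SArr A B') /\ styp g Q A /\ sty_sub B' B.
Proof.
  unfold sty_sub.
  intro H; remember (App P Q) as M; induction H; inversion HeqM; subst.
  - exists A, B; auto.
  - destruct IHstyp as (A & B' & H1 & H2 & [H3|[H3 H4]]); [reflexivity| |discriminate].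
    exists A, B'; auto.
  - inversion H.
Qed.

Lemma styp_lam_inv g x s N T : styp g (Lam x s N) T ->
  exists B, T = SArr (erase s) B /\ styp (extend g x (erase s)) N B.
Proof.
  intro H; remember (Lam x s N) as M; induction H; inversion HeqM; subst.
  - eauto.
  - destruct IHstyp as (B & H1 & _); [reflexivity | discriminate].
  - inversion H.
Qed.

Lemma styp_beta g x s M N T :
  styp g (App (Lam x s M) N) T -> styp g (subst1_tm x N M) T.
Proof.
  intro H. apply styp_app_inv in H as (A & B' & HL & HN & HB').
  apply styp_lam_inv in HL as (B & [= -> ->] & HM).
  assert (HMN : styp g (subst1_tm x N M) B).
  { eapply styp_subst; eauto. intros y T' _ HT.
    unfold subst_var, extend in *; simpl. destruct (Nat.eqb y x).
    - injection HT as <-; auto.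
    - apply st_var; auto. }
  eapply styp_sub; eauto.
Qed.

Lemma styp_apps_head g Ps H H' :
  (forall T, styp g H T -> styp g H' T) ->
  forall T, styp g (apps H Ps) T -> styp g (apps H' Ps) T.
Proof.
  revert H H'; induction Ps as [|P Ps IH]; simpl; intros H H' HH; auto.
  apply IH. intros T HT. apply styp_app_inv in HT as (A & B' & HH' & HP & HB').
  eapply styp_sub; [eapply st_app|]; eauto.
Qed.

Lemma styp_apps_final_codom g Ps H :
  (forall T, styp g H T -> final_codom T <> SIdx) ->
  forall T, styp g (apps H Ps) T -> final_codom T <> SIdx.
Proof.
  revert H; induction Ps as [|P Ps IH]; simpl; intros H HH; auto.
  apply IH. intros T HT. apply styp_app_inv in HT as (A & B' & HH' & _ & HB').
  apply HH in HH'. simpl in HH'. destruct HB' as [<-|[-> ->]]; simpl in *; congruence.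
Qed.

Definition non_index_head (M : tm G) : Prop :=
  match M with
  | If | Yc _ | Gate _ | Seq | Par | Reverse | Iter => True
  | _ => False
  end.

Lemma styp_non_index_head g H T :
  non_index_head H -> styp g H T -> final_codom T <> SIdx.
Proof.
  intros Hh HT; induction HT; simpl in *; try contradiction; try congruence.
  destruct H; simpl in *; try contradiction; discriminate.
Qed.

Lemma non_index_head_apps g H Ps :
  non_index_head H -> ~ styp g (apps H Ps) SIdx.
Proof.
  intros Hh HT. apply (styp_apps_final_codom g Ps H) in HT; auto.
  intros; eapply styp_non_index_head; eauto.
Qed.

Lemma eval_idx_numeral ar dag meas g M a V :
  eval ar dag meas M a V -> styp g M SIdx -> exists n, V = Num n.
Proof.
  induction 1; intros HT; try (eexists; reflexivity).
  - apply IHeval. eapply styp_apps_head; [|exact HT].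
    intros; eapply styp_beta; eauto.
  - contradict HT; apply (non_index_head_apps g If [M; L; Rt]); exact I.
  - contradict HT; apply (non_index_head_apps g If [M; L; Rt]); exact I.
  - contradict HT; apply (non_index_head_apps g (Yc s) (M :: Ps)); exact I.
  - contradict HT; apply (non_index_head_apps g (Gate U) []); exact I.
  - contradict HT; apply (non_index_head_apps g Seq [M; N]); exact I.
  - contradict HT; apply (non_index_head_apps g Par [M; N]); exact I.
  - contradict HT; apply (non_index_head_apps g Reverse [M]); exact I.
  - contradict HT; apply (non_index_head_apps g Iter [E; M0; M1]); exact I.
Qed.

Fixpoint base_ctx (B : base G) : ctx :=
  match B with
  | [] => fun _ => None
  | (y, s) :: B' => extend (base_ctx B') y (erase s)
  end.

Lemma base_ctx_in B x s : is_base B -> In (x, s) B -> base_ctx B x = Some (erase s).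
Proof.
  induction B as [|[y t] B IH]; simpl; intros HB Hin; [contradiction|].
  inversion HB as [|? ? Hy HB']; subst. unfold extend.
  destruct (Nat.eqb x y) eqn:Exy; destruct Hin as [[= -> ->]|Hin].
  - reflexivity.
  - apply Nat.eqb_eq in Exy; subst. exfalso. apply Hy, (in_map fst _ (y, s)), Hin.
  - rewrite Nat.eqb_refl in Exy; discriminate.
  - auto.
Qed.

Lemma base_ctx_remove_var B x y :
  base_ctx (remove_var x B) y = if Nat.eqb y x then None else base_ctx B y.
Proof.
  induction B as [|[a t] B IH]; simpl.
  - destruct (Nat.eqb y x); auto.
  - unfold extend. destruct (Nat.eqb a x) eqn:Eax; simpl; unfold extend; rewrite IH.
    + apply Nat.eqb_eq in Eax; subst. destruct (Nat.eqb y x); auto.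
    + destruct (Nat.eqb y x) eqn:Eyx, (Nat.eqb y a) eqn:Eya; auto.
      apply Nat.eqb_eq in Eyx; apply Nat.eqb_eq in Eya; subst.
      rewrite Nat.eqb_refl in Eax; discriminate.
Qed.

Lemma base_ctx_update x s B y :
  base_ctx (update x s B) y = extend (base_ctx B) x (erase s) y.
Proof.
  unfold update; simpl. unfold extend. rewrite base_ctx_remove_var.
  destruct (Nat.eqb y x); auto.
Qed.

Lemma yshape_final_codom (s : ty G) : yshape s -> final_codom (erase s) <> SIdx.
Proof. induction 1; simpl; auto; discriminate. Qed.

Lemma typ_erase ar B M s : typ ar B M s -> styp (base_ctx B) M (erase s).
Proof.
  induction 1; unfold arrow, iter_ty in *; simpl in *;
    try solve [do 2 constructor | constructor; auto].
  - apply st_var, base_ctx_in; auto.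
  - apply st_lam. apply styp_ctx_agree with (1 := IHtyp).
    intros y _; apply base_ctx_update.
  - unfold subst1_ty; rewrite erase_subst. eapply st_app; eauto.
  - rewrite <- (conv_ty_erase s t); auto.
  - apply st_Y, yshape_final_codom; auto.
  - eapply st_app; [do 2 constructor | eauto].
Qed.

End SimpleTypes.

Theorem corollary2 (G : Type) (ar : G -> nat) (dag : G -> G)
  (Hdag : forall U : G, ar (dag U) = ar U)
  (meas : nat -> tm G -> nat -> nat -> R -> Prop)
  (M N : tm G) :
  typ ar nil M TIdx ->
  eval ar dag meas M 1%R N ->
  typ ar nil N TIdx /\ exists n : nat, N = Num n.
Proof.
  intros HM HE.
  destruct (eval_idx_numeral G ar dag meas _ M 1%R N HE (typ_erase G ar _ _ _ HM))
    as [n ->].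
  split.
  - apply T_num; [constructor | intros t []].
  - exists n; reflexivity.
Qed.
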